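(* Let $n,x$ be integers with $1<x<n$, so that $G=C_{2n}(x,1,n)$ is a $5$-regular circulant graph. If $n\equiv x\equiv 0\pmod 3$ and $\tfrac{n}{2}\leq x\leq n$, then $G$ is word-representable.
   Context: Two distinct letters $x,y$ alternate in a word $w$ if, after deleting all other letters from $w$, the resulting word is of the form $xyxy\cdots$ or $yxyx\cdots$ (of even or odd length). A graph $G=(V,E)$ is word-representable if there is a word $w$ over the alphabet $V$, containing every letter of $V$ at least once, such that for all distinct $x,y\in V$, $xy\in E$ if and only if $x$ and $y$ alternate in $w$. For an integer $m$ and a set $R$ of positive integers each at most $m/2$, the circulant graph $C_m(R)$ has vertex set $\{0,1,\dots,m-1\}$, with $i$ and $j$ adjacent iff $\min(|i-j|,\,m-|i-j|)\in R$. $C_{2n}(x,1,n)$ denotes the circulant graph on $2n$ vertices with jump set $\{1,x,n\}$; it is $5$-regular exactly when $1<x<n$. *)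

From mathcomp Require Import all_boot.
Set Implicit Arguments. Unset Strict Implicit. Unset Printing Implicit Defensive.

Definition alt_word (T : Type) (x y : T) (k : nat) : seq T :=
  [seq (if odd i then y else x) | i <- iota 0 k].

Definition alternate (T : eqType) (x y : T) (w : seq T) : Prop :=
  let s := [seq z <- w | (z == x) || (z == y)] in
  s = alt_word x y (size s) \/ s = alt_word y x (size s).

Definition word_representable (V : finType) (E : rel V) : Prop :=
  exists w : seq V, (forall v : V, v \in w) /\
    (forall a b : V, a != b -> (E a b <-> alternate a b w)).

Definition circ_dist (m : nat) (i j : 'I_m) : nat :=
  let d := maxn i j - minn i j in minn d (m - d).

Definition circulant (m : nat) (R : seq nat) : rel 'I_m :=
  fun i j => circ_dist i j \in R.
Arguments circulant m R : clear implicits.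

From mathcomp Require Import all_boot zify.
Set Implicit Arguments. Unset Strict Implicit. Unset Printing Implicit Defensive.

(* Label the vertices of a graph properly by levels 0..3 and orient every edge towards its
   higher end.  If every directed path v0 v1 v2 v3 with v0 v3 an edge also has the edges v0 v2
   and v1 v3 (semi-transitivity; with four levels no longer paths exist), the graph is
   word-representable: concatenate, over all pairs (a, c), words listing every vertex twice in
   which every edge alternates and, when ac is not an edge, a and c do not.
   For C_2n(1, x, n) vertex i gets level (i mod 3 + #{t in {x, n, n + x} | t <= i}) mod 4.  An
   edge raising the level by 1 modulo 4 never lowers the residue mod 3, and keeps it only if it
   is a jump by +x.  A directed path v0 v1 v2 v3 closed by the edge v3 v0 raises the level by 1
   modulo 4 four times, so it is made of four +x jumps; then 4x = 2n, and v0 v2, v1 v3 are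
   diameters of the cycle, i.e. edges. *)

Lemma alt_wordD4 (T : Type) (a b : T) k :
  alt_word a b (4 + k) = [:: a; b; a; b] ++ alt_word a b k.
Proof.
rewrite /alt_word iotaD map_cat add0n -[4]addn0 iotaDl -map_comp.
by congr (_ ++ _); apply: eq_map => i /=; rewrite !negbK.
Qed.

Definition restrict2 (T : eqType) (a b : T) (s : seq T) := [seq z <- s | (z == a) || (z == b)].

Lemma alternate_sym (T : eqType) (a b : T) w : alternate a b w <-> alternate b a w.
Proof.
rewrite /alternate (eq_filter (a2 := fun z => (z == b) || (z == a))) => [|z]; last exact: orbC.
by split=> -[] ?; [right | left | right | left].
Qed.

Lemma flatten_alt_word4 (T : eqType) (a b : T) (ss : seq (seq T)) :
  all (fun s => size s == 4) ss ->
  (flatten ss == alt_word a b (size (flatten ss))) = all (pred1 [:: a; b; a; b]) ss.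
Proof.
elim: ss => [|s ss IH] //= /andP[/eqP size_s size_ss].
by rewrite size_cat size_s alt_wordD4 eqseq_cat ?size_s // IH.
Qed.

Lemma alternate_flatten4 (T : eqType) (a b : T) (ss : seq (seq T)) :
  all (fun s => size (restrict2 a b s) == 4) ss ->
  alternate a b (flatten ss) <->
  all (fun s => restrict2 a b s == [:: a; b; a; b]) ss \/
  all (fun s => restrict2 a b s == [:: b; a; b; a]) ss.
Proof.
move=> size_ss.
have size4 : all (fun s => size s == 4) [seq restrict2 a b s | s <- ss] by rewrite all_map.
have := flatten_alt_word4 a b size4; have := flatten_alt_word4 b a size4.
rewrite !all_map /alternate filter_flatten => Eba Eab.
split=> [[h|h]|[h|h]].
- by left; rewrite -Eab; apply/eqP.
- by right; rewrite -Eba; apply/eqP.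
- by left; apply/eqP; rewrite -Eab in h.
- by right; apply/eqP; rewrite -Eba in h.
Qed.

Definition segment (T : Type) (X Z : pred T) (s : seq T) :=
  filter Z s ++ filter X s ++ filter (predC Z) s ++ filter (predC X) s.

Lemma size_segment (T : Type) (X Z : pred T) s : size (segment X Z s) = (size s).*2.
Proof.
have := count_predC X s; have := count_predC Z s.
by rewrite /segment !size_cat !size_filter; lia.
Qed.

Lemma restrict2_segment (T : eqType) (a b : T) (X Z : pred T) s :
  restrict2 a b (segment X Z s) = segment X Z (restrict2 a b s).
Proof.
rewrite /restrict2 /segment !filter_cat -!filter_predI.
by congr (_ ++ _ ++ _ ++ _); apply: eq_filter => z /=; rewrite andbC.
Qed.

Lemma segment_not_alternating (T : eqType) (X Z : pred T) (a b : T) :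
  a != b -> (forall u, X u -> Z u) -> (X a && ~~ Z b) || (Z b && ~~ Z a) ->
  (segment X Z [:: a; b] != [:: a; b; a; b]) && (segment X Z [:: a; b] != [:: b; a; b; a]).
Proof.
move=> neq_ab sXZ; have /implyP := sXZ a; have /implyP := sXZ b; rewrite /segment /=.
have neq_ba : b != a by rewrite eq_sym.
by case: (X a); case: (X b); case: (Z a); case: (Z b) => //= _ _ _;
  rewrite !eqseq_cons eqxx (negbTE neq_ab) (negbTE neq_ba) ?andbF.
Qed.

Section LevelOrientation.
Variables (V : finType) (E : rel V) (L : V -> nat).
Hypothesis E_sym : symmetric E.
Hypothesis L_proper : forall u v, E u v -> L u != L v.
Hypothesis L_lt4 : forall v, L v < 4.

Definition up : rel V := fun u v => E u v && (L u < L v).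

Hypothesis up_shortcut : forall v0 v1 v2 v3,
  up v0 v1 -> up v1 v2 -> up v2 v3 -> E v0 v3 -> E v0 v2 && E v1 v3.

Definition key (v : V) : nat := L v * #|V| + enum_rank v.

Lemma key_inj : injective key.
Proof.
move=> u v /(congr1 (modn^~ #|V|)); rewrite /= /key !modnMDl !modn_small //.
by move/val_inj/enum_rank_inj.
Qed.

Lemma key_lt u v : L u < L v -> key u < key v.
Proof.
move=> lt_uv; rewrite /key (@leq_trans ((L u).+1 * #|V|)) //.
  by rewrite mulSn addnC ltn_add2r.
by apply: leq_trans (leq_addr _ _); rewrite leq_mul2r lt_uv orbT.
Qed.

Definition topo : seq V := sort (relpre key leq) (enum V).

Lemma restrict2_topo a b : key a < key b -> restrict2 a b topo = [:: a; b].
Proof.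
move=> lt_ab; have neq_ab : a != b by apply: contraTneq lt_ab => ->; rewrite ltnn.
have leT_total : total (relpre key leq) by move=> u v; apply: leq_total.
have leT_trans : transitive (relpre key leq) by move=> u v w; apply: leq_trans.
rewrite /restrict2 /topo filter_sort //.
have -> : sort (relpre key leq) [seq z <- enum V | (z == a) || (z == b)] =
          sort (relpre key leq) [:: a; b].
  apply/perm_sortP => //; first by move=> u v /anti_leq /key_inj.
  apply: uniq_perm; first by rewrite filter_uniq ?enum_uniq.
    by rewrite /= inE neq_ab.
  by move=> z; rewrite mem_filter mem_enum !inE andbT.
by apply: sorted_sort => //=; rewrite andbT ltnW.
Qed.

Definition admissible (X Z : pred V) :=
  [/\ forall u v, up u v -> X v -> X u, forall u v, up u v -> Z v -> Z u,
      forall u, X u -> Z u & forall u v, up u v -> X u -> Z v].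

Lemma segment_up X Z a b : admissible X Z -> up a b -> segment X Z [:: a; b] = [:: a; b; a; b].
Proof.
case=> downX downZ sXZ outXZ up_ab.
have /implyP := downX _ _ up_ab; have /implyP := downZ _ _ up_ab.
have /implyP := sXZ a; have /implyP := sXZ b; have /implyP := outXZ _ _ up_ab.
by rewrite /segment /=; case: (X a); case: (X b); case: (Z a); case: (Z b).
Qed.

Lemma connect_up_le u v : connect up u v -> L u <= L v.
Proof.
case/connectP=> p; elim: p u => [|w p IH] u /=; first by move=> _ ->.
by case/andP=> /andP[_ lt_uw] /IH h /h; apply: leq_trans (ltnW lt_uw).
Qed.

Lemma connect_up_first u v : connect up u v -> u != v -> exists2 w, up u w & connect up w v.
Proof.
case/connectP=> [[|w p]] /=; first by move=> _ ->; rewrite eqxx.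
by case/andP=> up_uw pth -> _; exists w => //; apply/connectP; exists p.
Qed.

Lemma connect_up_lt u v : connect up u v -> u != v -> L u < L v.
Proof.
move=> uv /(connect_up_first uv)[w /andP[_ lt_uw] /connect_up_le].
exact: leq_trans lt_uw.
Qed.

Lemma connect_up_succ u v : connect up u v -> L v = (L u).+1 -> up u v.
Proof.
move=> uv L_uv; have neq_uv : u != v by apply: contra_eqN L_uv => /eqP->; rewrite neq_ltn ltnSn.
have [w up_uw wv] := connect_up_first uv neq_uv.
have [<- // | neq_wv] := eqVneq w v.
by have := connect_up_lt wv neq_wv; case/andP: up_uw => _; rewrite L_uv; lia.
Qed.

Definition below (a : V) : pred V := fun u => connect up u a.

Definition below_out (a : V) : pred V := fun u =>
  [exists y, connect up u y && [exists z, below a z && ((z == y) || up z y)]].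

Lemma admissible_below a : admissible (below a) (below_out a).
Proof.
split=> [u v up_uv | u v up_uv /existsP[y /andP[vy zy]] | u au | u v au up_uv].
- exact: connect_trans (connect1 up_uv).
- by apply/existsP; exists y; rewrite (connect_trans (connect1 up_uv) vy).
- by apply/existsP; exists u; rewrite connect0; apply/existsP; exists u; rewrite au eqxx.
- by apply/existsP; exists v; rewrite connect0; apply/existsP; exists u; rewrite au up_uv orbT.
Qed.

Lemma admissible_pred0 c : admissible pred0 (below c).
Proof. by split=> // u v up_uv; apply: connect_trans (connect1 up_uv). Qed.

Lemma below_out_reach a c : a != c -> ~~ E a c -> connect up a c -> ~~ below_out a c.
Proof.
move=> neq_ac nEac ac; apply/negP=> /existsP[y /andP[cy /existsP[z /andP[za zy]]]].
have [b up_ab bc] := connect_up_first ac neq_ac.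
have neq_bc : b != c by apply: contraNneq nEac => <-; case/andP: up_ab.
have lt_ab : L a < L b by case/andP: up_ab.
have lt_bc := connect_up_lt bc neq_bc.
have le_cy := connect_up_le cy; have le_za := connect_up_le za; have Ly_lt4 := L_lt4 y.
case/orP: zy => [/eqP eq_zy | up_zy]; first by move: le_za; rewrite eq_zy; lia.
have lt_zy : L z < L y by case/andP: up_zy.
(* The levels z <= a < b < c <= y fit in 0..3 only if consecutive, so a, b, c and z or y
   form a directed path of three edges whose ends are joined by zy; its shortcut is ac. *)
have [eq_za | neq_za] := eqVneq z a.
  move: up_zy; rewrite {z za le_za lt_zy}eq_za => up_ay.
  have neq_cy : c != y by apply: contraNneq nEac => ->; case/andP: up_ay.
  have lt_cy := connect_up_lt cy neq_cy.
  have up_bc : up b c by apply: (connect_up_succ bc); lia.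
  have up_cy : up c y by apply: (connect_up_succ cy); lia.
  by case/andP: (up_shortcut up_ab up_bc up_cy (proj1 (andP up_ay))); rewrite (negbTE nEac).
have lt_za := connect_up_lt za neq_za.
have eq_cy : c = y.
  by apply/eqP; apply: contraT => /(connect_up_lt cy); lia.
move: up_zy; rewrite -{y cy le_cy lt_zy}eq_cy in Ly_lt4 * => up_zc.
have up_za : up z a by apply: (connect_up_succ za); lia.
have up_bc : up b c by apply: (connect_up_succ bc); lia.
by case/andP: (up_shortcut up_za up_ab up_bc (proj1 (andP up_zc))); rewrite (negbTE nEac).
Qed.

Definition separator (a c : V) : seq V :=
  if below_out a c then segment pred0 (below c) topo
  else segment (below a) (below_out a) topo.

Definition separators : seq (seq V) := [seq separator a c | a <- enum V, c <- enum V].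

Definition levels_word : seq V := flatten separators.

Lemma separator_segment a c :
  exists X Z, admissible X Z /\ separator a c = segment X Z topo.
Proof.
rewrite /separator; case: ifP => _.
  by exists pred0, (below c); split; first exact: admissible_pred0.
by exists (below a), (below_out a); split; first exact: admissible_below.
Qed.

Lemma separator_not_alternating a b : key a < key b -> ~~ E a b ->
  (restrict2 a b (separator a b) != [:: a; b; a; b]) &&
  (restrict2 a b (separator a b) != [:: b; a; b; a]).
Proof.
move=> lt_ab nEab; have neq_ab : a != b by apply: contraTneq lt_ab => ->; rewrite ltnn.
have [_ _ sub_out _] := admissible_below a.
rewrite /separator; case: ifP => out_b; rewrite restrict2_segment restrict2_topo //.
  apply: segment_not_alternating => //; rewrite /below connect0 /=.
  by apply: contraL out_b; apply: below_out_reach.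
by apply: segment_not_alternating => //; rewrite /below connect0 out_b.
Qed.

Lemma levels_word_alternate a b : key a < key b -> E a b <-> alternate a b levels_word.
Proof.
move=> lt_ab.
have sepP s : s \in separators ->
    exists X Z, admissible X Z /\ restrict2 a b s = segment X Z [:: a; b].
  case/allpairsP=> -[u w] [_ _ ->]; have [X [Z [adm ->]]] := separator_segment u w.
  by exists X, Z; rewrite restrict2_segment restrict2_topo.
have size4 : all (fun s => size (restrict2 a b s) == 4) separators.
  by apply/allP=> s /sepP[X [Z [_ ->]]]; rewrite size_segment.
rewrite /levels_word (alternate_flatten4 size4); split=> [Eab | alt_ab].
  have up_ab : up a b.
    rewrite /up Eab /=; have := L_proper Eab; rewrite neq_ltn => /orP[] // /key_lt.
    by rewrite ltnNge (ltnW lt_ab).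
  by left; apply/allP=> s /sepP[X [Z [adm ->]]]; rewrite segment_up.
apply/negPn/negP=> nEab.
have sep_ab : separator a b \in separators.
  by apply: allpairs_f; rewrite mem_enum.
case/andP: (separator_not_alternating lt_ab nEab) => ne_abab ne_baba.
by case: alt_ab => /allP/(_ _ sep_ab); [rewrite (negbTE ne_abab) | rewrite (negbTE ne_baba)].
Qed.

Lemma word_representable_levels : word_representable E.
Proof.
exists levels_word; split=> [v | a b neq_ab].
  apply/flattenP; exists (separator v v); first by apply: allpairs_f; rewrite mem_enum.
  have [X [Z [_ ->]]] := separator_segment v v.
  by rewrite !mem_cat !mem_filter /topo mem_sort mem_enum /= !andbT; case: (Z v); rewrite ?orbT.
case: (ltngtP (key a) (key b)) => [lt_ab | lt_ba | /key_inj eq_ab].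
- exact: levels_word_alternate.
- by rewrite E_sym alternate_sym; apply: levels_word_alternate.
- by rewrite eq_ab eqxx in neq_ab.
Qed.

End LevelOrientation.

Definition jump (m s u v : nat) : bool := (v == u + s) || (v + m == u + s).

Lemma circ_dist_jump m (i j : 'I_m) s : s.*2 <= m ->
  (circ_dist i j == s) = jump m s i j || jump m s j i.
Proof.
move=> le_sm; have := ltn_ord i; have := ltn_ord j; rewrite /circ_dist /jump.
by case: leqP => ?; case: leqP => ?; lia.
Qed.

Lemma circulant_sym m R : symmetric (circulant m R).
Proof. by move=> i j; rewrite /circulant /circ_dist (maxnC i) (minnC i). Qed.

Section CirculantLevels.
Variables n x : nat.
Hypotheses (x_gt1 : 1 < x) (x_lt_n : x < n) (n_mod3 : n %% 3 = 0) (x_mod3 : x %% 3 = 0)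
  (n_le_2x : n <= 2 * x).

Definition arc (u v : nat) : bool :=
  [|| jump (2 * n) 1 u v, jump (2 * n) x u v | jump (2 * n) n u v].

Definition adj (u v : nat) : bool := arc u v || arc v u.

Lemma circulantE (i j : 'I_(2 * n)) : circulant (2 * n) [:: 1; x; n] i j = adj i j.
Proof. by rewrite /circulant !inE !circ_dist_jump /adj /arc; lia. Qed.

Definition cross (i : nat) : nat := (x <= i) + (n <= i) + (n + x <= i).
Definition level (i : nat) : nat := (i %% 3 + cross i) %% 4.
Definition lift (u v : nat) : nat := (level v + 4 - level u) %% 4.

Lemma level_lt4 i : level i < 4. Proof. exact: ltn_pmod. Qed.

Lemma lift_eq0 u v : (lift u v == 0) = (level u == level v).
Proof. by have := level_lt4 u; have := level_lt4 v; rewrite /lift; lia. Qed.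

Lemma lift_sym u v : lift v u = (4 - lift u v) %% 4.
Proof. by have := level_lt4 u; have := level_lt4 v; rewrite /lift; lia. Qed.

Lemma lift_jump1 u v : u < 2 * n -> v < 2 * n -> jump (2 * n) 1 u v ->
  if u %% 3 == 2 then 1 < lift u v else lift u v == 1.
Proof. by rewrite /lift /level /cross /jump => ? ?; case: ifP => /eqP; lia. Qed.

Lemma lift_jumpx u v : u < 2 * n -> v < 2 * n -> jump (2 * n) x u v -> 0 < lift u v < 3.
Proof. by rewrite /lift /level /cross /jump; lia. Qed.

Lemma lift_jumpn u v : u < 2 * n -> v < 2 * n -> jump (2 * n) n u v -> lift u v = 2.
Proof. by rewrite /lift /level /cross /jump; lia. Qed.

Lemma adj_sym u v : adj u v = adj v u.
Proof. exact: orbC. Qed.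

Lemma level_adj_neq u v : u < 2 * n -> v < 2 * n -> adj u v -> level u != level v.
Proof.
have arc_lift w z : w < 2 * n -> z < 2 * n -> arc w z -> lift w z != 0.
  move=> hw hz /or3P[j | j | j].
  - by have := lift_jump1 hw hz j; case: ifP => _; lia.
  - by have := lift_jumpx hw hz j; lia.
  - by rewrite (lift_jumpn hw hz j).
move=> hu hv; rewrite -lift_eq0 => /orP[/(arc_lift _ _ hu hv) // | /(arc_lift _ _ hv hu)].
by rewrite lift_sym; lia.
Qed.

Definition up_step (u v : nat) : bool :=
  [|| jump (2 * n) 1 u v && (u %% 3 != 2), jump (2 * n) 1 v u && (u %% 3 == 0)
    | jump (2 * n) x u v].

Lemma up_step_lift1 u v : u < 2 * n -> v < 2 * n -> adj u v -> lift u v = 1 -> up_step u v.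
Proof.
move=> hu hv /orP[] /or3P[j | j | j] lift1.
- by have := lift_jump1 hu hv j; rewrite /up_step j lift1; case: eqP.
- by rewrite /up_step j !orbT.
- by move: lift1; rewrite (lift_jumpn hu hv j).
- have := lift_jump1 hv hu j; rewrite lift_sym lift1 /up_step j /=.
  by case: eqP => // /eqP v_mod3 _; move: j; rewrite /jump; lia.
- by have := lift_jumpx hv hu j; rewrite lift_sym lift1.
- by move: lift1; rewrite lift_sym (lift_jumpn hv hu j).
Qed.

Lemma up_step_mod3 u v : u < 2 * n -> v < 2 * n -> up_step u v ->
  u %% 3 <= v %% 3 ?= iff jump (2 * n) x u v.
Proof. by rewrite /up_step /jump => ? ? ?; split; lia. Qed.

Lemma up_cycle_jumps_x v0 v1 v2 v3 :
  v0 < 2 * n -> v1 < 2 * n -> v2 < 2 * n -> v3 < 2 * n ->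
  up_step v0 v1 -> up_step v1 v2 -> up_step v2 v3 -> up_step v3 v0 ->
  [&& jump (2 * n) x v0 v1, jump (2 * n) x v1 v2, jump (2 * n) x v2 v3 & jump (2 * n) x v3 v0].
Proof.
move=> h0 h1 h2 h3 /(up_step_mod3 h0 h1)[le01 <-] /(up_step_mod3 h1 h2)[le12 <-]
  /(up_step_mod3 h2 h3)[le23 <-] /(up_step_mod3 h3 h0)[le30 <-].
lia.
Qed.

Lemma x_cycle_diagonals v0 v1 v2 v3 :
  v0 < 2 * n -> v1 < 2 * n -> v2 < 2 * n -> v3 < 2 * n ->
  jump (2 * n) x v0 v1 -> jump (2 * n) x v1 v2 -> jump (2 * n) x v2 v3 -> jump (2 * n) x v3 v0 ->
  jump (2 * n) n v0 v2 && jump (2 * n) n v1 v3.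
Proof. rewrite /jump; lia. Qed.

Lemma level_up_shortcut v0 v1 v2 v3 :
  v0 < 2 * n -> v1 < 2 * n -> v2 < 2 * n -> v3 < 2 * n ->
  adj v0 v1 -> adj v1 v2 -> adj v2 v3 -> adj v0 v3 ->
  level v0 < level v1 -> level v1 < level v2 -> level v2 < level v3 ->
  adj v0 v2 && adj v1 v3.
Proof.
move=> h0 h1 h2 h3 a01 a12 a23 a03 l01 l12 l23.
have [L0 L1 L2 L3] : [/\ level v0 = 0, level v1 = 1, level v2 = 2 & level v3 = 3].
  by have := level_lt4 v3; split; lia.
have s01 : up_step v0 v1 by apply: up_step_lift1; rewrite // /lift L0 L1.
have s12 : up_step v1 v2 by apply: up_step_lift1; rewrite // /lift L1 L2.
have s23 : up_step v2 v3 by apply: up_step_lift1; rewrite // /lift L2 L3.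
have s30 : up_step v3 v0 by apply: up_step_lift1; rewrite // 1?adj_sym // /lift L3 L0.
case/and4P: (up_cycle_jumps_x h0 h1 h2 h3 s01 s12 s23 s30) => x01 x12 x23 x30.
case/andP: (x_cycle_diagonals h0 h1 h2 h3 x01 x12 x23 x30) => n02 n13.
by rewrite /adj /arc n02 n13 !orbT.
Qed.
End CirculantLevels.

Theorem corollary3 (n x : nat) :
  1 < x -> x < n ->
  n %% 3 = 0 -> x %% 3 = 0 ->
  n <= 2 * x -> x <= n ->
  word_representable (circulant (2 * n) [:: 1; x; n]).
Proof.
move=> x_gt1 x_lt_n n_mod3 x_mod3 n_le_2x _.
apply: (@word_representable_levels _ _ (fun i : 'I_(2 * n) => level n x i)).
- exact: circulant_sym.
- by move=> i j; rewrite circulantE //; apply: level_adj_neq.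
- by move=> i; apply: level_lt4.
- move=> v0 v1 v2 v3 /andP[a01 l01] /andP[a12 l12] /andP[a23 l23].
  rewrite !circulantE // in a01 a12 a23 * => a03.
  by apply: level_up_shortcut.
Qed.
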